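(* Define $\tau:\mathrm{Cu}_2\setminus\{\lozenge\}\to\mathbb C$ by $\tau(w)=1$ if $w=s_{\mathbf i1}s_{\mathbf i}^*$ for some $\mathbf i\in\mathbf I$, and $\tau(w)=0$ otherwise, and regard it as the bounded linear functional $f\mapsto\sum_{w}f(w)\tau(w)$ on $\mathcal A$. Then $\tau$ is a non-zero bounded trace on $\mathcal A$ with $\tau(\delta_e)=0$; consequently $\tau$ vanishes on $\mathcal J$ and induces a non-zero bounded trace on $\mathcal A/\mathcal J$.
   Context: Let $\mathrm{Cu}_2$ be the involutive monoid with identity $e$ and zero element $\lozenge$ (so $\lozenge t=\lozenge=t\lozenge$ for all $t$), generated by $s_1,s_2,s_1^*,s_2^*$ subject to $s_1^*s_1=e=s_2^*s_2$ and $s_1^*s_2=\lozenge=s_2^*s_1$, with involution $t\mapsto t^*$ satisfying $(t^* )^*=t$, $(tu)^*=u^*t^*$. Let $\mathbf I_0=\{\emptyset\}$, $\mathbf I_n=\{1,2\}^n$, $\mathbf I=\bigcup_{n\ge0}\mathbf I_n$ (finite words; $\mathbf i1$ denotes the word $\mathbf i$ followed by the letter $1$). For $\mathbf i=(i_1,\dots,i_k)\in\mathbf I$ put $s_{\mathbf i}=s_{i_1}\cdots s_{i_k}$ ($s_\emptyset=e$) and $s_{\mathbf i}^*=(s_{\mathbf i})^*$. Let $\mathcal A=\ell^1(\mathrm{Cu}_2\setminus\{\lozenge\})$ with product $\#$ determined by bilinearity and continuity from $\delta_s\#\delta_t=\delta_{st}$ if $st\neq\lozenge$ and $\delta_s\#\delta_t=0$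 if $st=\lozenge$; this is a unital Banach algebra with unit $\delta_e$. Let $f_0=\delta_e-\delta_{s_1s_1^*}-\delta_{s_2s_2^*}$ and let $\mathcal J$ be the closed two-sided ideal of $\mathcal A$ generated by $f_0$. A trace on a Banach algebra $\mathcal B$ is a linear functional $\tau$ with $\tau(ab)=\tau(ba)$ for all $a,b\in\mathcal B$. *)

From HB Require Import structures.
From mathcomp Require Import all_boot all_order all_algebra.
From mathcomp Require Import all_classical reals ereal esum.
From mathcomp Require Import complex.

Set Implicit Arguments.
Unset Strict Implicit.
Unset Printing Implicit Defensive.

Import Order.TTheory GRing.Theory Num.Theory.
Local Open Scope ring_scope.
Local Open Scope complex_scope.

(** Letters: [false] stands for the generator index 1, [true] for index 2.
   Words [seq bool] are elements of I.  Every element of Cu_2 \ {◇} is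
   uniquely of the form s_mu s_nu^*, represented by the pair (mu, nu). *)

Definition l1 : bool := false.
Definition l2 : bool := true.

Definition word := seq bool.
Definition Cu2 := (word * word)%type.

Definition Cu2_e : Cu2 := ([::], [::]).

Definition Cu2_s (i : bool) : Cu2 := ([:: i], [::]).
Definition Cu2_sstar (i : bool) : Cu2 := ([::], [:: i]).

Definition Cu2_star (w : Cu2) : Cu2 := (w.2, w.1).

(** product; [None] is the zero element ◇.
   s_mu s_nu^* s_a s_b^* = s_(mu a') s_b^*      if a = nu a'
                         = s_mu s_(b nu')^*     if nu = a nu'
                         = ◇                   otherwise *)
Definition Cu2_mul (u v : Cu2) : option Cu2 :=
  let: (mu, nu) := u in let: (a, b) := v in
  if prefix nu a then Some (mu ++ drop (size nu) a, b)
  else if prefix a nu then Some (mu, b ++ drop (size a) nu)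
  else None.

Definition cabs (R : realType) (z : R[i]) : R := ComplexField.Normc.normc z.

Section Sums.
Variable R : realType.
Variable T : choiceType.

Definition rsum (g : T -> R) : R :=
  (fine (\esum_(x in [set: T]) (Num.max (g x) 0)%:E)
   - fine (\esum_(x in [set: T]) (Num.max (- g x) 0)%:E))%R.

Definition csum (f : T -> R[i]) : R[i] :=
  Complex (rsum (fun x => complex.Re (f x))) (rsum (fun x => complex.Im (f x))).

Definition abs_summable (f : T -> R[i]) : Prop :=
  (\esum_(x in [set: T]) (cabs (f x))%:E < +oo)%E.

End Sums.

Section L1.
Variable R : realType.

Definition C := R[i].

Definition inA (f : Cu2 -> C) : Prop := abs_summable f.

Definition l1norm (f : Cu2 -> C) : R :=
  fine (\esum_(w in [set: Cu2]) (cabs (f w))%:E).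

Definition delta (s : Cu2) : Cu2 -> C := fun w => if w == s then 1 else 0.

Definition plusL1 (f g : Cu2 -> C) : Cu2 -> C := fun w => f w + g w.
Definition minusL1 (f g : Cu2 -> C) : Cu2 -> C := fun w => f w - g w.
Definition scaleL1 (a : C) (f : Cu2 -> C) : Cu2 -> C := fun w => a * f w.
Definition zeroL1 : Cu2 -> C := fun _ => 0.

Definition conv (f g : Cu2 -> C) : Cu2 -> C := fun w =>
  csum (fun p : Cu2 * Cu2 =>
          if Cu2_mul p.1 p.2 == Some w then f p.1 * g p.2 else 0).

Definition f0 : Cu2 -> C :=
  minusL1 (minusL1 (delta Cu2_e) (delta ([:: l1], [:: l1]))) (delta ([:: l2], [:: l2])).

Definition closed_ideal (I : set (Cu2 -> C)) : Prop :=
  (forall f, I f -> inA f) /\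
  [/\ I zeroL1,
      (forall f g, I f -> I g -> I (plusL1 f g)),
      (forall a f, I f -> I (scaleL1 a f)),
      (forall a f, inA a -> I f -> I (conv a f) /\ I (conv f a))
    & (forall f, inA f ->
         (forall eps : R, 0 < eps -> exists2 g, I g & l1norm (minusL1 f g) < eps) ->
         I f)].

Definition J : set (Cu2 -> C) :=
  fun f => forall I, closed_ideal I -> I f0 -> I f.

Definition tau_w (w : Cu2) : C := if w.1 == rcons w.2 l1 then 1 else 0.

Definition tauA (f : Cu2 -> C) : C := csum (fun w => f w * tau_w w).

End L1.

From HB Require Import structures.
From mathcomp Require Import all_boot all_order all_algebra.
From mathcomp Require Import all_classical reals ereal esum.
From mathcomp Require Import complex.
From mathcomp Require Import ring lra zify.
From Stdlib Require Import Lia.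
Import Order.TTheory GRing.Theory Num.Theory.

Set Implicit Arguments.
Unset Strict Implicit.
Unset Printing Implicit Defensive.

(** In normal forms s_mu s_nu^*, and with tau(◇) = 0, the monoid Cu_2 satisfies
      tau(uv) = tau(vu)   and   tau(u) = tau(u s_1 s_1^* ) + tau(u s_2 s_2^* ).
   Absolute summability lets tau(f # g) be expanded as a sum over pairs, so the
   first identity makes tau a trace and the second gives tau(c # f_0) = 0 for all
   c; associativity of Cu_2, read off its faithful action on words, also gives
   tau((c # a) # f) = tau(c # (a # f)). Hence {f | tau(A # f) = 0} is an ideal,
   closed because tau is bounded, which contains f_0 and therefore J; since
   delta_e is the unit of A, tau vanishes on J. *)

Lemma prefix_cat2l (s t u : word) : prefix (s ++ t) (s ++ u) = prefix t u.
Proof. by rewrite prefix_catr // eqxx. Qed.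

Lemma prefix_comparable (s1 s2 t : word) :
  prefix s1 t -> prefix s2 t -> prefix s1 s2 \/ prefix s2 s1.
Proof.
elim: t s1 s2 => [|x t IH] [|y1 s1] [|y2 s2] //=; try by [left|right].
by move=> /andP[/eqP -> p1] /andP[/eqP -> p2]; rewrite eqxx /=; exact: IH.
Qed.

(* Cu_2 acts faithfully on words by partial maps: s_mu s_nu^* sends nu x to
   mu x and is undefined elsewhere; the normal-form product is composition. *)
Definition Cu2_act (o : option Cu2) (x : word) : option word :=
  if o is Some (mu, nu) then
    if prefix nu x then Some (mu ++ drop (size nu) x) else None
  else None.

Definition Cu2_mulo (o1 o2 : option Cu2) : option Cu2 :=
  if (o1, o2) is (Some u, Some v) then Cu2_mul u v else None.

Lemma Cu2_act_mul u v x :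
  Cu2_act (Cu2_mul u v) x = obind (Cu2_act (Some u)) (Cu2_act (Some v) x).
Proof.
case: u v => mu nu [a b] /=.
case: (boolP (prefix b x)) => [/prefixP[y ->{x}]|pbx] /=; last first.
  case: ifP => [/prefixP[a' ->]|_] /=; first by rewrite (negPf pbx).
  case: ifP => [/prefixP[n' ->]|//] /=.
  case: ifP => // /prefixP[z]; rewrite -catA => ex.
  by rewrite ex prefix_prefix in pbx.
rewrite drop_size_cat //.
case: ifP => [/prefixP[a' ->]|na] /=.
  rewrite -!catA (prefix_prefix b y) (prefix_prefix nu (a' ++ y)).
  by rewrite !drop_size_cat.
case: ifP => [/prefixP[n' ->]|an] /=.
  rewrite drop_size_cat // !prefix_cat2l; case: ifP => //= _.
  by rewrite !size_cat !drop_cat ltnNge leq_addr /= ltnNge leq_addr /= !addKn.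
case: ifP => // pn; exfalso.
by have [] := prefix_comparable pn (prefix_prefix a y); [rewrite na | rewrite an].
Qed.

Lemma Cu2_act_mulo o1 o2 x :
  Cu2_act (Cu2_mulo o1 o2) x = obind (Cu2_act o1) (Cu2_act o2 x).
Proof.
case: o1 => [u|]; case: o2 => [[a b]|] //=; first exact: Cu2_act_mul.
by case: ifP.
Qed.

Lemma Cu2_act_inj o1 o2 : (forall x, Cu2_act o1 x = Cu2_act o2 x) -> o1 = o2.
Proof.
case: o1 => [[mu nu]|]; case: o2 => [[a b]|] //= E.
- have := E nu; rewrite prefix_refl drop_size cats0.
  case: ifP => // /prefixP[y ey] [em].
  have := E b; rewrite prefix_refl drop_size cats0.
  case: ifP => // /prefixP[z ez] _.
  have /size0nil y0 : size y = 0.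
    by move: (congr1 size ey) (congr1 size ez); rewrite !size_cat; lia.
  by move: ey em; rewrite y0 cats0 => ->; rewrite drop_size cats0 => ->.
- by have := E nu; rewrite prefix_refl.
- by have := E b; rewrite prefix_refl.
Qed.

Lemma Cu2_mulA x y z :
  Cu2_mulo (Cu2_mul x y) (Some z) = Cu2_mulo (Some x) (Cu2_mul y z).
Proof.
apply: Cu2_act_inj => w.
rewrite !Cu2_act_mulo Cu2_act_mul.
by case: (Cu2_act (Some z) w) => [v|] //; exact: Cu2_act_mul.
Qed.

Lemma Cu2_mul1l v : Cu2_mul Cu2_e v = Some v.
Proof. by case: v => [[|? ?] ?]. Qed.

Lemma Cu2_mul1r u : Cu2_mul u Cu2_e = Some u.
Proof. by case: u => mu [|j nu] /=; rewrite ?cats0. Qed.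

Definition tau_word (w : Cu2) : bool := w.1 == rcons w.2 l1.

Definition tau_opt (o : option Cu2) : bool := if o is Some w then tau_word w else false.

Lemma tau_opt_mulC u v : tau_opt (Cu2_mul u v) = tau_opt (Cu2_mul v u).
Proof.
suff tau_opt_mul_swap x y : tau_opt (Cu2_mul x y) -> tau_opt (Cu2_mul y x).
  by apply/idP/idP; exact: tau_opt_mul_swap.
have catsI (b s t : word) : b ++ s = b ++ t -> s = t.
  by move/(congr1 (drop (size b))); rewrite !drop_size_cat.
have cat_eq1 (s t : word) c : s ++ t = [:: c] ->
    (s = [:: c] /\ t = [::]) \/ (s = [::] /\ t = [:: c]).
  by case: s => [|? [|? ?]] //= => [->|[-> ->]]; [right|left].
case: x y => mu nu [a b]; rewrite /tau_opt /tau_word /l1 /=.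
case: ifP => [/prefixP[a' ->]|na].
  rewrite /= -!cats1 drop_size_cat // => /eqP H.
  case: ifP => [/prefixP[m' em]|nbm].
    move: H; rewrite em /= -!cats1 drop_size_cat // -catA.
    by move=> /catsI /cat_eq1 [[-> ->]|[-> ->]]; rewrite -catA.
  case: ifP => [/prefixP[b' eb]|nmb].
    move: H; rewrite eb /= -!cats1 drop_size_cat // -catA => /catsI ->.
    by rewrite catA.
  exfalso; have [] := prefix_comparable (prefix_prefix mu a') (_ : prefix b (mu ++ a')).
  - by rewrite H prefix_prefix.
  - by move=> h; rewrite h in nmb.
  - by move=> h; rewrite h in nbm.
case: ifP => [/prefixP[n' ->]|//].
rewrite /= -!cats1 drop_size_cat // => /eqP ->.
by rewrite -catA (prefix_prefix b (n' ++ [:: false])) /= drop_size_cat // -cats1 catA.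
Qed.

Definition a1 : Cu2 := ([:: l1], [:: l1]).
Definition a2 : Cu2 := ([:: l2], [:: l2]).

(* The relation s_1 s_1^* + s_2 s_2^* = e, seen by tau from the left. *)
Lemma tau_opt_split u :
  tau_opt (Some u) = tau_opt (Cu2_mul u a1) + tau_opt (Cu2_mul u a2) :> nat.
Proof.
rewrite /a1 /a2 /tau_opt /tau_word /l1 /l2.
case: u => mu [|j nu] /=.
  by case: mu => [|x [|y mu]] //=; case: x => //; case: y => //; case: mu.
by case: j; case: nu => [|k nu] /=; rewrite ?drop0 /= ?cats0 ?addn0.
Qed.

Local Open Scope ring_scope.
Local Open Scope classical_set_scope.

Section NonnegExtendedSums.
Variable R : realType.
Local Open Scope ereal_scope.

Lemma ge0_esumZl (T : choiceType) (r : R) (a : T -> \bar R) :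
  (0 <= r)%R -> (forall x, 0 <= a x) ->
  \esum_(x in [set: T]) (r%:E * a x) = r%:E * \esum_(x in [set: T]) a x.
Proof.
move=> r0 a0; rewrite /esum -ereal_supZl//; last first.
  by apply/set0P; exists 0; exists set0; [exact: fsets_set0|rewrite fsbig_set0].
congr ereal_sup; rewrite image_comp /=; apply: eq_imagel => A [fA _] /=.
by rewrite !fsbig_finite//= ge0_sume_distrr// => x _; exact: a0.
Qed.

Lemma esum_ge_term (T : choiceType) (a : T -> \bar R) t :
  (forall x, 0 <= a x) -> a t <= \esum_(x in [set: T]) a x.
Proof.
move=> a0; apply: esum_ge; exists [set t]; first by split; [exact: finite_set1|].
by rewrite fsbig_set1.
Qed.

Lemma ge0_esum_reindex (T T' : choiceType) (e : T -> T') (a : T' -> \bar R) :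
  injective e -> (forall y, ~ (exists x, e x = y) -> a y = 0) ->
  \esum_(x in [set: T]) a (e x) = \esum_(y in [set: T']) a y.
Proof.
move=> ei az; rewrite -(esum_image [set: T] e a); last by move=> x y _ _ /ei.
rewrite [LHS]esum_mkcond; apply: eq_esum => y _; case: ifPn => // /negP nin.
by rewrite az // => -[x ex]; apply: nin; apply/mem_set; exists x.
Qed.

Lemma ge0_esum_pair (T1 T2 : choiceType) (a : T1 * T2 -> \bar R) :
  (forall p, 0 <= a p) ->
  \esum_(x in [set: T1]) \esum_(y in [set: T2]) a (x, y) =
  \esum_(p in [set: T1 * T2]) a p.
Proof.
move=> a0; rewrite (esum_esum (I := [set: T1]) (J := fun _ => [set: T2])
  (a := fun x y => a (x, y))) //.
have -> : [set: T1] `*`` (fun _ => [set: T2]) = [set: T1 * T2].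
  by apply/seteqP; split => // [[x y]].
by apply: eq_esum => -[x y].
Qed.

Lemma ge0_esum_fibers (T S : choiceType) (p : T -> S) (a : T -> \bar R) :
  (forall t, 0 <= a t) ->
  \esum_(s in [set: S]) \esum_(t in [set: T]) (if p t == s then a t else 0) =
  \esum_(t in [set: T]) a t.
Proof.
move=> a0; rewrite (ge0_esum_pair (a := fun q : S * T =>
  if p q.2 == q.1 then a q.2 else 0)); last by move=> [s t] /=; case: ifP.
rewrite -(@ge0_esum_reindex _ _ (fun t => (p t, t))
  (fun q : S * T => if p q.2 == q.1 then a q.2 else 0)).
- by apply: eq_esum => t _ /=; rewrite eqxx.
- by move=> x y [].
- by move=> [s t] /= H; case: eqP => // e; case: H; exists t; rewrite e.
Qed.

End NonnegExtendedSums.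

Section RealSums.
Variables (R : realType) (T : choiceType).
Implicit Types (g h a b : T -> R).

Definition rsummable g := (\esum_(x in [set: T]) `|g x|%:E < +oo)%E.

Definition pos_part g t := Num.max (g t) 0.
Definition neg_part g t := Num.max (- g t) 0.

Lemma pos_part_ge0 g t : 0 <= pos_part g t.
Proof. by rewrite /pos_part le_max lexx orbT. Qed.

Lemma neg_part_ge0 g t : 0 <= neg_part g t.
Proof. by rewrite /neg_part le_max lexx orbT. Qed.

Lemma pos_partBneg g t : pos_part g t - neg_part g t = g t.
Proof.
by rewrite /pos_part /neg_part; have [h|h] := lerP 0 (g t);
  have [h2|h2] := lerP 0 (- g t); lra.
Qed.

Lemma pos_partDneg g t : pos_part g t + neg_part g t = `|g t|.
Proof.
rewrite /pos_part /neg_part; have [h|h] := lerP 0 (g t);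
  [rewrite ger0_norm | rewrite ltr0_norm] => //; have [h2|h2] := lerP 0 (- g t); lra.
Qed.

Lemma rsum_pos_neg g : rsum g =
  fine (\esum_(x in [set: T]) (pos_part g x)%:E) -
  fine (\esum_(x in [set: T]) (neg_part g x)%:E).
Proof. by []. Qed.

Local Open Scope ereal_scope.

Lemma esum_fineK a : (forall x, 0 <= a x)%R ->
  \esum_(x in [set: T]) (a x)%:E < +oo ->
  (fine (\esum_(x in [set: T]) (a x)%:E))%:E = \esum_(x in [set: T]) (a x)%:E.
Proof.
move=> a0 lt; rewrite fineK// ge0_fin_numE// esum_ge0// => x _.
by rewrite lee_fin.
Qed.

Lemma esum_finite_le a b : (forall x, 0 <= a x <= b x)%R ->
  \esum_(x in [set: T]) (b x)%:E < +oo -> \esum_(x in [set: T]) (a x)%:E < +oo.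
Proof.
move=> ab; apply: le_lt_trans; apply: le_esum => x _; rewrite lee_fin.
by case/andP: (ab x).
Qed.

Lemma fine_esum_ge0 a : (forall x, 0 <= a x)%R ->
  (0 <= fine (\esum_(x in [set: T]) (a x)%:E))%R.
Proof. by move=> a0; apply: fine_ge0; apply: esum_ge0 => x _; rewrite lee_fin. Qed.

Lemma esumD_EFin a b : (forall x, 0 <= a x)%R -> (forall x, 0 <= b x)%R ->
  \esum_(x in [set: T]) (a x + b x)%:E =
  \esum_(x in [set: T]) (a x)%:E + \esum_(x in [set: T]) (b x)%:E.
Proof.
move=> a0 b0; rewrite -esumD; try by move=> x _; rewrite lee_fin.
by apply: eq_esum => x _; rewrite EFinD.
Qed.

Lemma esumZl_EFin c a : (0 <= c)%R -> (forall x, 0 <= a x)%R ->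
  \esum_(x in [set: T]) (c * a x)%:E = c%:E * \esum_(x in [set: T]) (a x)%:E.
Proof.
by move=> c0 a0; rewrite -ge0_esumZl.
Qed.

Lemma esumZl_finite c a : (0 <= c)%R -> (forall x, 0 <= a x)%R ->
  \esum_(x in [set: T]) (a x)%:E < +oo ->
  \esum_(x in [set: T]) (c * a x)%:E < +oo.
Proof. by move=> c0 a0 fa; rewrite esumZl_EFin // lte_mul_pinfty ?lee_fin. Qed.

Lemma fine_esumD a b : (forall x, 0 <= a x)%R -> (forall x, 0 <= b x)%R ->
  \esum_(x in [set: T]) (a x)%:E < +oo -> \esum_(x in [set: T]) (b x)%:E < +oo ->
  fine (\esum_(x in [set: T]) (a x + b x)%:E) =
  (fine (\esum_(x in [set: T]) (a x)%:E) + fine (\esum_(x in [set: T]) (b x)%:E))%R.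
Proof.
move=> a0 b0 fa fb; rewrite esumD_EFin// fineD// ge0_fin_numE//;
  by apply: esum_ge0 => x _; rewrite lee_fin.
Qed.

Lemma fine_esumZl c a : (0 <= c)%R -> (forall x, 0 <= a x)%R ->
  \esum_(x in [set: T]) (a x)%:E < +oo ->
  fine (\esum_(x in [set: T]) (c * a x)%:E) =
  (c * fine (\esum_(x in [set: T]) (a x)%:E))%R.
Proof. by move=> c0 a0 fa; rewrite esumZl_EFin // -(esum_fineK a0 fa). Qed.

Lemma rsummable_bound g a : (forall x, `|g x| <= a x)%R ->
  \esum_(x in [set: T]) (a x)%:E < +oo -> rsummable g.
Proof. by move=> ga; apply: esum_finite_le => x; rewrite normr_ge0 ga. Qed.

Lemma rsummable_pos_part g : rsummable g ->
  \esum_(x in [set: T]) (pos_part g x)%:E < +oo.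
Proof.
apply: esum_finite_le => x; rewrite pos_part_ge0 -pos_partDneg /=.
by rewrite lerDl neg_part_ge0.
Qed.

Lemma rsummable_neg_part g : rsummable g ->
  \esum_(x in [set: T]) (neg_part g x)%:E < +oo.
Proof.
apply: esum_finite_le => x; rewrite neg_part_ge0 -pos_partDneg /=.
by rewrite lerDr pos_part_ge0.
Qed.

Lemma rsummableD g h : rsummable g -> rsummable h -> rsummable (fun x => g x + h x)%R.
Proof.
move=> fg fh; apply: (@rsummable_bound _ (fun x => `|g x| + `|h x|)%R).
  by move=> x; rewrite ler_normD.
by rewrite esumD_EFin ?lte_add_pinfty.
Qed.

Lemma rsummableZ c g : rsummable g -> rsummable (fun x => c * g x)%R.
Proof.
move=> fg; apply: (@rsummable_bound _ (fun x => `|c| * `|g x|)%R).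
  by move=> x; rewrite normrM.
exact: esumZl_finite.
Qed.

Lemma rsum_diff g a b : (forall x, 0 <= a x)%R -> (forall x, 0 <= b x)%R ->
  \esum_(x in [set: T]) (a x)%:E < +oo -> \esum_(x in [set: T]) (b x)%:E < +oo ->
  (forall t, g t = a t - b t)%R ->
  rsum g = (fine (\esum_(x in [set: T]) (a x)%:E) -
            fine (\esum_(x in [set: T]) (b x)%:E))%R.
Proof.
move=> a0 b0 fa fb gab.
have fP : \esum_(x in [set: T]) (pos_part g x)%:E < +oo.
  apply: esum_finite_le fa => x; rewrite pos_part_ge0 /= /pos_part ge_max a0.
  by rewrite gab lerBlDr lerDl b0.
have fN : \esum_(x in [set: T]) (neg_part g x)%:E < +oo.
  apply: esum_finite_le fb => x; rewrite neg_part_ge0 /= /neg_part ge_max b0.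
  by rewrite gab opprB lerBlDr lerDl a0.
have : fine (\esum_(x in [set: T]) (pos_part g x + b x)%:E) =
       fine (\esum_(x in [set: T]) (neg_part g x + a x)%:E).
  congr fine; apply: eq_esum => x _; congr EFin.
  by have := pos_partBneg g x; rewrite gab; lra.
rewrite (fine_esumD (pos_part_ge0 g) b0 fP fb) (fine_esumD (neg_part_ge0 g) a0 fN fa).
by rewrite rsum_pos_neg; lra.
Qed.

Lemma rsumD g h : rsummable g -> rsummable h ->
  rsum (fun x => g x + h x)%R = (rsum g + rsum h)%R.
Proof.
move=> fg fh; have [fPg fNg] := (rsummable_pos_part fg, rsummable_neg_part fg).
have [fPh fNh] := (rsummable_pos_part fh, rsummable_neg_part fh).
rewrite (@rsum_diff _ (fun x => pos_part g x + pos_part h x)%R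
                      (fun x => neg_part g x + neg_part h x)%R).
- rewrite (fine_esumD (pos_part_ge0 g) (pos_part_ge0 h) fPg fPh).
  rewrite (fine_esumD (neg_part_ge0 g) (neg_part_ge0 h) fNg fNh).
  by rewrite (rsum_pos_neg g) (rsum_pos_neg h); lra.
- by move=> x; rewrite addr_ge0 ?pos_part_ge0.
- by move=> x; rewrite addr_ge0 ?neg_part_ge0.
- by rewrite esumD_EFin ?lte_add_pinfty //; exact: pos_part_ge0.
- by rewrite esumD_EFin ?lte_add_pinfty //; exact: neg_part_ge0.
- by move=> t; rewrite -(pos_partBneg g t) -(pos_partBneg h t); lra.
Qed.

Lemma rsumZ c g : rsummable g -> rsum (fun x => c * g x)%R = (c * rsum g)%R.
Proof.
move=> fg; have [fP fN] := (rsummable_pos_part fg, rsummable_neg_part fg).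
have [c0|c0] := lerP 0 c.
  rewrite (@rsum_diff _ (fun x => c * pos_part g x)%R (fun x => c * neg_part g x)%R).
  - rewrite (fine_esumZl c0 (pos_part_ge0 g) fP) (fine_esumZl c0 (neg_part_ge0 g) fN).
    by rewrite rsum_pos_neg mulrBr.
  - by move=> x; rewrite mulr_ge0 ?pos_part_ge0.
  - by move=> x; rewrite mulr_ge0 ?neg_part_ge0.
  - exact: esumZl_finite (pos_part_ge0 g) fP.
  - exact: esumZl_finite (neg_part_ge0 g) fN.
  - by move=> t; rewrite -(pos_partBneg g t) mulrBr.
have c0' : (0 <= - c)%R by rewrite oppr_ge0 ltW.
rewrite (@rsum_diff _ (fun x => - c * neg_part g x)%R (fun x => - c * pos_part g x)%R).
- rewrite (fine_esumZl c0' (pos_part_ge0 g) fP) (fine_esumZl c0' (neg_part_ge0 g) fN).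
  by rewrite rsum_pos_neg; ring.
- by move=> x; rewrite mulr_ge0 ?neg_part_ge0.
- by move=> x; rewrite mulr_ge0 ?pos_part_ge0.
- exact: esumZl_finite (neg_part_ge0 g) fN.
- exact: esumZl_finite (pos_part_ge0 g) fP.
- by move=> t; rewrite -(pos_partBneg g t); ring.
Qed.

Lemma norm_rsum_le g : rsummable g ->
  (`|rsum g| <= fine (\esum_(x in [set: T]) `|g x|%:E))%R.
Proof.
move=> fg; rewrite (eq_esum (b := fun x => (pos_part g x + neg_part g x)%:E)); last first.
  by move=> x _; rewrite pos_partDneg.
rewrite (fine_esumD (pos_part_ge0 g) (neg_part_ge0 g) (rsummable_pos_part fg)
  (rsummable_neg_part fg)).
have := fine_esum_ge0 (pos_part_ge0 g); have := fine_esum_ge0 (neg_part_ge0 g).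
rewrite rsum_pos_neg; set x := fine _; set y := fine _ => hx hy.
by rewrite ler_norml; apply/andP; split; lra.
Qed.

Lemma ge0_esum_single a s : (forall x, 0 <= a x)%R ->
  (forall t, t != s -> a t = 0%R) -> \esum_(x in [set: T]) (a x)%:E = (a s)%:E.
Proof.
move=> a0 az; rewrite (esumID [set s]); last by move=> x _; rewrite lee_fin.
rewrite setTI esum_set1 ?lee_fin// esum1 ?adde0// => x [_ /= /eqP xs].
by rewrite az.
Qed.

Lemma rsum_single g s : (forall t, t != s -> g t = 0%R) -> rsum g = g s.
Proof.
move=> gs; rewrite rsum_pos_neg (@ge0_esum_single _ s (pos_part_ge0 g)); last first.
  by move=> t /gs; rewrite /pos_part => ->; rewrite maxxx.
rewrite (@ge0_esum_single _ s (neg_part_ge0 g)) ?pos_partBneg //.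
by move=> t /gs; rewrite /neg_part => ->; rewrite oppr0 maxxx.
Qed.

Lemma rsummable_single g s : (forall t, t != s -> g t = 0%R) -> rsummable g.
Proof.
move=> gs; rewrite /rsummable (@ge0_esum_single _ s) ?ltry // => t.
by move=> /gs ->; rewrite normr0.
Qed.

End RealSums.

Section RealSumsOverPairs.
Variable R : realType.
Local Open Scope ereal_scope.

Lemma rsum_reindex (T T' : choiceType) (e : T -> T') (g : T' -> R) :
  injective e -> (forall y, ~ (exists x, e x = y) -> g y = 0%R) ->
  rsum (fun x => g (e x)) = rsum g.
Proof.
move=> ei gz; rewrite /rsum.
rewrite (@ge0_esum_reindex _ _ _ e (fun y => (Num.max (g y) 0)%:E) ei); last first.
  by move=> y /gz ->; rewrite maxxx.
rewrite (@ge0_esum_reindex _ _ _ e (fun y => (Num.max (- g y) 0)%:E) ei) //.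
by move=> y /gz ->; rewrite oppr0 maxxx.
Qed.

Lemma esum_pair_finite_snd (T1 T2 : choiceType) (a : T1 * T2 -> R) x :
  (forall p, 0 <= a p)%R -> \esum_(p in [set: T1 * T2]) (a p)%:E < +oo ->
  \esum_(y in [set: T2]) (a (x, y))%:E < +oo.
Proof.
move=> a0; rewrite -ge0_esum_pair; last by move=> p; rewrite lee_fin.
apply: le_lt_trans.
apply: (@esum_ge_term _ _ (fun x => \esum_(y in [set: T2]) (a (x, y))%:E) x).
by move=> z; apply: esum_ge0 => y _; rewrite lee_fin.
Qed.

Lemma esum_pair_fine (T1 T2 : choiceType) (a : T1 * T2 -> R) :
  (forall p, 0 <= a p)%R -> \esum_(p in [set: T1 * T2]) (a p)%:E < +oo ->
  \esum_(x in [set: T1]) (fine (\esum_(y in [set: T2]) (a (x, y))%:E))%:E =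
  \esum_(p in [set: T1 * T2]) (a p)%:E.
Proof.
move=> a0 fa; rewrite -ge0_esum_pair; last by move=> p; rewrite lee_fin.
apply: eq_esum => x _; rewrite esum_fineK //; last exact: esum_pair_finite_snd.
Qed.

Lemma rsum_pair (T1 T2 : choiceType) (g : T1 * T2 -> R) :
  rsummable g -> rsum g = rsum (fun x => rsum (fun y => g (x, y))).
Proof.
move=> fg; have [fP fN] := (rsummable_pos_part fg, rsummable_neg_part fg).
rewrite [RHS](@rsum_diff _ _ _
   (fun x => fine (\esum_(y in [set: T2]) (pos_part g (x, y))%:E))
   (fun x => fine (\esum_(y in [set: T2]) (neg_part g (x, y))%:E))).
- by rewrite !esum_pair_fine //; [exact: neg_part_ge0|exact: pos_part_ge0].
- by move=> x; apply: fine_esum_ge0 => y; exact: pos_part_ge0.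
- by move=> x; apply: fine_esum_ge0 => y; exact: neg_part_ge0.
- by rewrite esum_pair_fine //; exact: pos_part_ge0.
- by rewrite esum_pair_fine //; exact: neg_part_ge0.
- move=> x; apply: rsum_diff => [y|y|||y]; rewrite ?pos_part_ge0 ?neg_part_ge0
    ?pos_partBneg //; apply: esum_pair_finite_snd => //;
    [exact: pos_part_ge0|exact: neg_part_ge0].
Qed.

End RealSumsOverPairs.

Section ComplexSums.
Variable R : realType.
Local Open Scope complex_scope.
Local Notation Re := complex.Re.
Local Notation Im := complex.Im.

Lemma ReD (x y : R[i]) : Re (x + y) = (Re x + Re y)%R. Proof. by case: x; case: y. Qed.

Lemma ImD (x y : R[i]) : Im (x + y) = (Im x + Im y)%R. Proof. by case: x; case: y. Qed.

Lemma ReM (x y : R[i]) : Re (x * y) = (Re x * Re y - Im x * Im y)%R.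
Proof. by case: x => a b; case: y => c d. Qed.

Lemma ImM (x y : R[i]) : Im (x * y) = (Re x * Im y + Im x * Re y)%R.
Proof. by case: x => a b; case: y => c d. Qed.

Lemma cabs_ge0 (z : R[i]) : (0 <= cabs z)%R.
Proof. by case: z => a b; rewrite /cabs /= sqrtr_ge0. Qed.

Lemma cabs0 : cabs (0 : R[i]) = 0%R. Proof. exact: ComplexField.Normc.normc0. Qed.

Lemma cabs1 : cabs (1 : R[i]) = 1%R. Proof. exact: ComplexField.Normc.normc1. Qed.

Lemma cabsM (z w : R[i]) : cabs (z * w) = (cabs z * cabs w)%R.
Proof. exact: ComplexField.Normc.normcM. Qed.

Lemma cabs_eq0 (z : R[i]) : cabs z = 0%R -> z = 0.
Proof. exact: ComplexField.Normc.eq0_normc. Qed.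

Lemma normr_Re_le (z : R[i]) : (`|Re z| <= cabs z)%R.
Proof. by case: z => a b; rewrite /cabs /= -sqrtr_sqr ler_wsqrtr // lerDl sqr_ge0. Qed.

Lemma normr_Im_le (z : R[i]) : (`|Im z| <= cabs z)%R.
Proof. by case: z => a b; rewrite /cabs /= -sqrtr_sqr ler_wsqrtr // lerDr sqr_ge0. Qed.

Lemma cabs_le_ReIm (z : R[i]) : (cabs z <= `|Re z| + `|Im z|)%R.
Proof.
case: z => a b; rewrite /cabs /=.
rewrite -[leRHS]ger0_norm ?addr_ge0 // -sqrtr_sqr; apply: ler_wsqrtr.
rewrite sqrrD !real_normK ?num_real //.
by have := normr_ge0 a; have := normr_ge0 b; nra.
Qed.

Lemma cabs_eq0_le_eps (z : R[i]) (K : R) : (0 <= K)%R ->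
  (forall eps : R, (0 < eps)%R -> (cabs z <= K * eps)%R) -> z = 0.
Proof.
move=> K0 zK; apply: cabs_eq0; apply/eqP; rewrite eq_le cabs_ge0 andbT.
apply/ler_addgt0Pr => e e0; rewrite add0r.
have K1 : (0 < K + 1)%R by rewrite ltr_wpDl.
have := zK _ (divr_gt0 e0 K1); have := mulfVK (lt0r_neq0 K1) e.
set d := (e / (K + 1))%R; have : (0 < d)%R by rewrite divr_gt0.
by nra.
Qed.

Section OneIndex.
Variable T : choiceType.
Implicit Types (f g h : T -> R[i]).

Lemma csumE f : csum f = (rsum (fun x => Re (f x)) +i* rsum (fun x => Im (f x)))%C.
Proof. by []. Qed.

Lemma abs_summable_bound h (c : T -> R) : (forall x, cabs (h x) <= c x)%R ->
  (\esum_(x in [set: T]) (c x)%:E < +oo)%E -> abs_summable h.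
Proof. by move=> hc; apply: esum_finite_le => x; rewrite cabs_ge0 hc. Qed.

Lemma abs_summable_Re f : abs_summable f -> rsummable (fun x => Re (f x)).
Proof. by apply: rsummable_bound => x; exact: normr_Re_le. Qed.

Lemma abs_summable_Im f : abs_summable f -> rsummable (fun x => Im (f x)).
Proof. by apply: rsummable_bound => x; exact: normr_Im_le. Qed.

Lemma rsummable_ReIm f : rsummable (fun x => Re (f x)) -> rsummable (fun x => Im (f x)) ->
  abs_summable f.
Proof.
move=> sRe sIm; apply: (@abs_summable_bound _ (fun x => `|Re (f x)| + `|Im (f x)|)%R).
  by move=> x; exact: cabs_le_ReIm.
by rewrite esumD_EFin ?lte_add_pinfty.
Qed.

Lemma abs_summableD f g : abs_summable f -> abs_summable g ->
  abs_summable (fun x => f x + g x).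
Proof.
move=> sf sg; apply: rsummable_ReIm.
  under eq_fun do rewrite ReD.
  by apply: rsummableD; exact: abs_summable_Re.
under eq_fun do rewrite ImD.
by apply: rsummableD; exact: abs_summable_Im.
Qed.

Lemma abs_summable_mul_bounded f (k : T -> R[i]) (M : R) :
  abs_summable f -> (forall x, cabs (k x) <= M)%R -> abs_summable (fun x => f x * k x).
Proof.
move=> sf kM; apply: (@abs_summable_bound _ (fun x => Num.max M 0 * cabs (f x))%R).
  move=> x; rewrite cabsM [leRHS]mulrC; apply: ler_wpM2l; first exact: cabs_ge0.
  by apply: le_trans (kM x) _; rewrite le_max lexx.
by apply: esumZl_finite sf; [rewrite le_max lexx orbT|move=> x; exact: cabs_ge0].
Qed.

Lemma abs_summableZ (a : R[i]) f : abs_summable f -> abs_summable (fun x => a * f x).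
Proof.
move=> sf; under eq_fun do rewrite mulrC.
by apply: (abs_summable_mul_bounded (M := cabs a)) => // x.
Qed.

Lemma abs_summable_single f s : (forall t, t != s -> f t = 0) -> abs_summable f.
Proof. by move=> fs; apply: rsummable_ReIm; apply: (rsummable_single (s := s)) => t /fs ->. Qed.

Lemma csumD f g : abs_summable f -> abs_summable g ->
  csum (fun x => f x + g x) = csum f + csum g.
Proof.
move=> sf sg; rewrite !csumE.
have -> : (fun x => Re (f x + g x)) = (fun x => Re (f x) + Re (g x))%R.
  by apply: funext => x; rewrite ReD.
have -> : (fun x => Im (f x + g x)) = (fun x => Im (f x) + Im (g x))%R.
  by apply: funext => x; rewrite ImD.
by rewrite !rsumD ?abs_summable_Re ?abs_summable_Im.
Qed.

Lemma csumZ (a : R[i]) f : abs_summable f -> csum (fun x => a * f x) = a * csum f.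
Proof.
move=> sf; rewrite !csumE.
have -> : (fun x => Re (a * f x)) = (fun x => Re a * Re (f x) + - Im a * Im (f x))%R.
  by apply: funext => x; rewrite ReM mulNr.
have -> : (fun x => Im (a * f x)) = (fun x => Re a * Im (f x) + Im a * Re (f x))%R.
  by apply: funext => x; rewrite ImM.
rewrite !rsumD ?rsummableZ ?abs_summable_Re ?abs_summable_Im //.
rewrite !rsumZ ?abs_summable_Re ?abs_summable_Im //.
by case: a => a b /=; congr (_ +i* _); ring.
Qed.

Lemma csum_single f s : (forall t, t != s -> f t = 0) -> csum f = f s.
Proof.
move=> fs; rewrite csumE !(rsum_single (s := s)); first by case: (f s).
- by move=> t /fs ->.
- by move=> t /fs ->.
Qed.

Lemma csum0 : csum (fun _ : T => 0 : R[i]) = 0.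
Proof.
have s0 : abs_summable (fun _ : T => 0 : R[i]).
  by rewrite /abs_summable cabs0 esum1 ?ltry.
rewrite -[RHS](mul0r (csum (fun _ : T => 0 : R[i]))) -csumZ //.
by congr csum; apply: funext => x; rewrite mul0r.
Qed.

Lemma norm_csum_le f : abs_summable f ->
  (cabs (csum f) <= 2 * fine (\esum_(x in [set: T]) (cabs (f x))%:E))%R.
Proof.
move=> sf; rewrite csumE; apply: (le_trans (cabs_le_ReIm _)) => /=.
have h1 := norm_rsum_le (abs_summable_Re sf); have h2 := norm_rsum_le (abs_summable_Im sf).
have fine_le_cabs (k : R[i] -> R) : (forall z, `|k z| <= cabs z)%R ->
    (fine (\esum_(x in [set: T]) `|k (f x)|%:E) <=
     fine (\esum_(x in [set: T]) (cabs (f x))%:E))%R.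
  move=> kz; apply: fine_le; rewrite ?ge0_fin_numE //;
    try by apply: esum_ge0 => x _; rewrite lee_fin ?cabs_ge0.
  - by apply: le_lt_trans sf; apply: le_esum => x _; rewrite lee_fin.
  - by apply: le_esum => x _; rewrite lee_fin.
have := fine_le_cabs _ normr_Re_le; have := fine_le_cabs _ normr_Im_le; lra.
Qed.

End OneIndex.

Lemma abs_summable_reindex (T T' : choiceType) (e : T -> T') (f : T' -> R[i]) :
  injective e -> (forall y, ~ (exists x, e x = y) -> f y = 0) ->
  abs_summable (fun x => f (e x)) <-> abs_summable f.
Proof.
move=> ei fz; rewrite /abs_summable.
by rewrite (@ge0_esum_reindex _ _ _ e (fun y => (cabs (f y))%:E)) // => y /fz ->; rewrite cabs0.
Qed.

Lemma csum_reindex (T T' : choiceType) (e : T -> T') (f : T' -> R[i]) :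
  injective e -> (forall y, ~ (exists x, e x = y) -> f y = 0) ->
  csum (fun x => f (e x)) = csum f.
Proof.
move=> ei fz; rewrite !csumE (rsum_reindex (g := fun y => Re (f y))) //.
  by rewrite (rsum_reindex (g := fun y => Im (f y))) // => y /fz ->.
by move=> y /fz ->.
Qed.

Lemma csum_pair (T1 T2 : choiceType) (g : T1 * T2 -> R[i]) :
  abs_summable g -> csum g = csum (fun x => csum (fun y => g (x, y))).
Proof.
by move=> sg; rewrite !csumE (rsum_pair (abs_summable_Re sg)) (rsum_pair (abs_summable_Im sg)).
Qed.

Lemma csum_fibers (T S : choiceType) (p : T -> S) (f : T -> R[i]) :
  abs_summable f ->
  csum f = csum (fun s => csum (fun t => if p t == s then f t else 0)).
Proof.
move=> sf; pose k (q : S * T) := if p q.2 == q.1 then f q.2 else 0.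
have ei : injective (fun t => (p t, t)) by move=> x y [].
have kz y : ~ (exists x, (p x, x) = y) -> k y = 0.
  by case: y => s t H; rewrite /k /=; case: eqP => // e; case: H; exists t; rewrite e.
have kE : (fun t => k (p t, t)) = f by apply: funext => t; rewrite /k /= eqxx.
have sk : abs_summable k by rewrite -(abs_summable_reindex ei kz) kE.
by rewrite -{1}kE (csum_reindex ei kz) (csum_pair sk).
Qed.

Lemma esum_prod (T1 T2 : choiceType) (a : T1 -> R) (b : T2 -> R) :
  (forall x, 0 <= a x)%R -> (forall y, 0 <= b y)%R ->
  (\esum_(x in [set: T1]) (a x)%:E < +oo)%E -> (\esum_(y in [set: T2]) (b y)%:E < +oo)%E ->
  \esum_(p in [set: T1 * T2]) (a p.1 * b p.2)%:E =
  (fine (\esum_(x in [set: T1]) (a x)%:E) * fine (\esum_(y in [set: T2]) (b y)%:E))%:E.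
Proof.
move=> a0 b0 fa fb.
rewrite -(ge0_esum_pair (a := fun p : T1 * T2 => (a p.1 * b p.2)%:E)); last first.
  by move=> p; rewrite lee_fin mulr_ge0.
rewrite (eq_esum (b := fun x => (fine (\esum_(y in [set: T2]) (b y)%:E) * a x)%:E));
  last by move=> x _ /=; rewrite esumZl_EFin // -(esum_fineK b0 fb) -EFinM mulrC.
by rewrite esumZl_EFin ?fine_esum_ge0 // -(esum_fineK a0 fa) -EFinM mulrC.
Qed.

Lemma abs_summable_prod (T1 T2 : choiceType) (f : T1 -> R[i]) (g : T2 -> R[i]) :
  abs_summable f -> abs_summable g -> abs_summable (fun p => f p.1 * g p.2).
Proof.
move=> sf sg; rewrite /abs_summable.
under eq_esum => p _ do rewrite cabsM.
by rewrite (esum_prod (a := fun x => cabs (f x)) (b := fun y => cabs (g y))) ?ltry //;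
  move=> x; exact: cabs_ge0.
Qed.

End ComplexSums.

Section L1Algebra.
Variable R : realType.
Implicit Types (f g h c : Cu2 -> R[i]).

(* [None] encodes the zero element, where every function of A is taken to be 0. *)
Definition extend0 (K : Cu2 -> R[i]) (o : option Cu2) : R[i] :=
  if o is Some w then K w else 0.

Definition tauc (o : option Cu2) : R[i] := extend0 (tau_w R) o.

Lemma tau_wE w : tau_w R w = if tau_word w then 1 else 0.
Proof. by []. Qed.

Lemma tauc_natr o : tauc o = (tau_opt o)%:R.
Proof. by case: o => [w|] //=; rewrite /tauc /= tau_wE; case: tau_word. Qed.

Lemma tauc_split u : tauc (Some u) = tauc (Cu2_mul u a1) + tauc (Cu2_mul u a2).
Proof. by rewrite !tauc_natr tau_opt_split natrD. Qed.

Lemma tauc_mulC u v : tauc (Cu2_mul u v) = tauc (Cu2_mul v u).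
Proof. by rewrite !tauc_natr tau_opt_mulC. Qed.

Lemma cabs_tau_w_le1 w : (cabs (tau_w R w) <= 1)%R.
Proof. by rewrite tau_wE; case: tau_word; rewrite ?cabs1 ?cabs0. Qed.

Lemma cabs_extend0_le K M o : (forall w, cabs (K w) <= M)%R ->
  (cabs (extend0 K o) <= Num.max M 0)%R.
Proof.
move=> KM; case: o => [w|]; last by rewrite cabs0 le_max lexx orbT.
by apply: le_trans (KM w) _; rewrite le_max lexx.
Qed.

Lemma cabs_tauc_le1 o : (cabs (tauc o) <= 1)%R.
Proof.
by case: o => [w|]; [exact: cabs_tau_w_le1|rewrite cabs0].
Qed.

Lemma l1norm_ge0 f : (0 <= l1norm f)%R.
Proof. by apply: fine_esum_ge0 => w; exact: cabs_ge0. Qed.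

Lemma inA_plus f g : inA f -> inA g -> inA (plusL1 f g).
Proof. exact: abs_summableD. Qed.

Lemma inA_scale a f : inA f -> inA (scaleL1 a f).
Proof. exact: abs_summableZ. Qed.

Lemma minusL1E f g : minusL1 f g = plusL1 f (scaleL1 (-1) g).
Proof. by apply: funext => w; rewrite /minusL1 /plusL1 /scaleL1 mulN1r. Qed.

Lemma inA_minus f g : inA f -> inA g -> inA (minusL1 f g).
Proof. by move=> sf sg; rewrite minusL1E; apply: inA_plus => //; apply: inA_scale. Qed.

Lemma inA_delta s : inA (delta R s).
Proof. by apply: (abs_summable_single (s := s)) => t; rewrite /delta => /negPf ->. Qed.

Lemma norm_csum_bounded_mul_le f K : inA f -> (forall w, cabs (K w) <= 1)%R ->
  (cabs (csum (fun w => f w * K w)) <= 2 * l1norm f)%R.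
Proof.
move=> sf K1; apply: le_trans (norm_csum_le (abs_summable_mul_bounded sf K1)) _.
have esum_cabs_ge0 (k : Cu2 -> R[i]) : (0 <= \esum_(w in [set: Cu2]) (cabs (k w))%:E)%E.
  by apply: esum_ge0 => w _; rewrite lee_fin cabs_ge0.
apply: ler_wpM2l => //; apply: fine_le.
- by rewrite ge0_fin_numE //; exact: abs_summable_mul_bounded sf K1.
- by rewrite ge0_fin_numE.
apply: le_esum => w _; rewrite lee_fin cabsM -[leRHS]mulr1.
by apply: ler_wpM2l; [exact: cabs_ge0|exact: K1].
Qed.

Lemma tauA_bound f : inA f -> (cabs (tauA f) <= 2 * l1norm f)%R.
Proof. by move=> sf; apply: norm_csum_bounded_mul_le => // w; exact: cabs_tau_w_le1. Qed.

Lemma tauA_D f g : inA f -> inA g -> tauA (plusL1 f g) = tauA f + tauA g.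
Proof.
move=> sf sg; rewrite /tauA -csumD; last 2 first.
- exact: (abs_summable_mul_bounded sf (cabs_tau_w_le1)).
- exact: (abs_summable_mul_bounded sg (cabs_tau_w_le1)).
by congr csum; apply: funext => w; rewrite /plusL1 mulrDl.
Qed.

Lemma tauA_Z a f : inA f -> tauA (scaleL1 a f) = a * tauA f.
Proof.
move=> sf; rewrite /tauA -csumZ; last exact: (abs_summable_mul_bounded sf (cabs_tau_w_le1)).
by congr csum; apply: funext => w; rewrite /scaleL1 mulrA.
Qed.

Lemma tauA_minus f g : inA f -> inA g -> tauA (minusL1 f g) = tauA f - tauA g.
Proof.
by move=> sf sg; rewrite minusL1E tauA_D ?tauA_Z ?mulN1r //; exact: inA_scale.
Qed.

Lemma csum_delta_mul s (K : Cu2 -> R[i]) : csum (fun v => delta R s v * K v) = K s.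
Proof.
rewrite (csum_single (s := s)) /delta ?eqxx ?mul1r // => t /negPf ->.
by rewrite mul0r.
Qed.

Lemma abs_summable_delta_mul s (K : Cu2 -> R[i]) :
  abs_summable (fun v => delta R s v * K v).
Proof.
by apply: (abs_summable_single (s := s)) => t; rewrite /delta => /negPf ->; rewrite mul0r.
Qed.

Lemma tauA_delta s : tauA (delta R s) = tau_w R s.
Proof. exact: csum_delta_mul. Qed.

(* A total version of the product: pairs multiplying to the zero element go to
   an arbitrary index, where their summands vanish anyway. *)
Definition conv_index (p : Cu2 * Cu2) : Cu2 := odflt Cu2_e (Cu2_mul p.1 p.2).

Lemma abs_summable_conv_family f g w : inA f -> inA g ->
  abs_summable (fun p : Cu2 * Cu2 =>
    if Cu2_mul p.1 p.2 == Some w then f p.1 * g p.2 else 0).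
Proof.
move=> sf sg; apply: (abs_summable_bound (c := fun p => cabs (f p.1 * g p.2))).
  by move=> p; case: ifP; rewrite ?cabs0 ?cabs_ge0.
exact: abs_summable_prod.
Qed.

Lemma csum_conv_mul f g K M : inA f -> inA g -> (forall w, cabs (K w) <= M)%R ->
  csum (fun w => conv f g w * K w) =
  csum (fun p : Cu2 * Cu2 => f p.1 * g p.2 * extend0 K (Cu2_mul p.1 p.2)).
Proof.
move=> sf sg KM.
have sF : abs_summable (fun p : Cu2 * Cu2 => f p.1 * g p.2 * extend0 K (Cu2_mul p.1 p.2)).
  apply: (abs_summable_mul_bounded (M := Num.max M 0)); first exact: abs_summable_prod.
  by move=> p; exact: cabs_extend0_le.
rewrite (csum_fibers conv_index sF); congr csum; apply: funext => w.
rewrite /conv mulrC -csumZ; last exact: abs_summable_conv_family.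
congr csum; apply: funext => p; rewrite /conv_index.
case: (Cu2_mul p.1 p.2) => [w'|] /=; last by rewrite !mulr0; case: ifP.
by rewrite [Some w' == Some w]/eq_op /=; case: eqP => [->|_]; [ring|rewrite mulr0].
Qed.

Lemma tauA_conv f g : inA f -> inA g ->
  tauA (conv f g) = csum (fun p : Cu2 * Cu2 => f p.1 * g p.2 * tauc (Cu2_mul p.1 p.2)).
Proof. by move=> sf sg; rewrite /tauA (csum_conv_mul (M := 1%R)) // => w; exact: cabs_tau_w_le1. Qed.

Lemma tauA_convC f g : inA f -> inA g -> tauA (conv f g) = tauA (conv g f).
Proof.
move=> sf sg; rewrite !tauA_conv //.
pose swap (p : Cu2 * Cu2) := (p.2, p.1).
have swap_inj : injective swap by move=> [a b] [c d] [-> ->].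
rewrite -(csum_reindex (e := swap)
  (f := fun p : Cu2 * Cu2 => g p.1 * f p.2 * tauc (Cu2_mul p.1 p.2))) //.
  by congr csum; apply: funext => -[u v] /=; rewrite tauc_mulC; ring.
by move=> [a b] H; case: H; exists (b, a).
Qed.

Lemma cabs_conv_le f g w : inA f -> inA g ->
  (cabs (conv f g w) <= 2 * fine (\esum_(p in [set: Cu2 * Cu2])
     (if conv_index p == w then cabs (f p.1 * g p.2) else 0)%:E))%R.
Proof.
move=> sf sg; apply: le_trans (norm_csum_le (abs_summable_conv_family w sf sg)) _.
have fibre_le (p : Cu2 * Cu2) : (0 <= (if conv_index p == w then cabs (f p.1 * g p.2) else 0)
    <= cabs (f p.1 * g p.2))%R.
  by case: ifP; rewrite ?lexx ?cabs_ge0.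
apply: ler_wpM2l => //; apply: fine_le.
- rewrite ge0_fin_numE; first exact: abs_summable_conv_family.
  by apply: esum_ge0 => p _; rewrite lee_fin cabs_ge0.
- rewrite ge0_fin_numE; first exact: esum_finite_le fibre_le (abs_summable_prod sf sg).
  by apply: esum_ge0 => p _; rewrite lee_fin; case/andP: (fibre_le p).
apply: le_esum => p _; rewrite lee_fin /conv_index.
case: (Cu2_mul p.1 p.2) => [w'|]; last first.
  by rewrite (_ : (None == Some w) = false) // cabs0; case: ifP; rewrite ?cabs_ge0.
rewrite (_ : (Some w' == Some w) = (w' == w)) // [odflt _ _]/=.
by case: ifP; rewrite ?cabs0.
Qed.

Lemma esum_cabs_conv_le f g : inA f -> inA g ->
  (\esum_(w in [set: Cu2]) (cabs (conv f g w))%:E <=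
   (2 * (l1norm f * l1norm g))%:E)%E.
Proof.
move=> sf sg; pose a w (p : Cu2 * Cu2) :=
  if conv_index p == w then cabs (f p.1 * g p.2) else 0%R.
have a0 w p : (0 <= a w p)%R by rewrite /a; case: ifP; rewrite ?cabs_ge0.
have fin_a w : (\esum_(p in [set: Cu2 * Cu2]) (a w p)%:E < +oo)%E.
  apply: esum_finite_le (abs_summable_prod sf sg) => p.
  by rewrite a0 /a; case: ifP; rewrite ?lexx ?cabs_ge0.
apply: (@le_trans _ _ (\esum_(w in [set: Cu2])
    (2 * fine (\esum_(p in [set: Cu2 * Cu2]) (a w p)%:E))%:E)%E).
  by apply: le_esum => w _; rewrite lee_fin; exact: cabs_conv_le.
rewrite esumZl_EFin //; last by move=> w; apply: fine_esum_ge0.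
under eq_esum => w _ do rewrite esum_fineK //.
rewrite (eq_esum (b := fun w => \esum_(p in [set: Cu2 * Cu2])
   (if conv_index p == w then (cabs (f p.1 * g p.2))%:E else 0%E))); last first.
  by move=> w _; apply: eq_esum => p _; rewrite /a; case: ifP.
rewrite ge0_esum_fibers; last by move=> p; rewrite lee_fin cabs_ge0.
under eq_esum => p _ do rewrite cabsM.
rewrite (esum_prod (a := fun x => cabs (f x)) (b := fun y => cabs (g y))) //;
  by move=> x; exact: cabs_ge0.
Qed.

Lemma inA_conv f g : inA f -> inA g -> inA (conv f g).
Proof. by move=> sf sg; apply: le_lt_trans (esum_cabs_conv_le sf sg) _; exact: ltry. Qed.

Lemma l1norm_conv_le f g : inA f -> inA g ->
  (l1norm (conv f g) <= 2 * (l1norm f * l1norm g))%R.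
Proof.
move=> sf sg; rewrite /l1norm -lee_fin esum_fineK ?esum_cabs_conv_le //.
  by move=> w; exact: cabs_ge0.
exact: inA_conv.
Qed.

Lemma abs_summable_mul_tauc (T : choiceType) (F : T -> R[i]) (k : T -> option Cu2) :
  abs_summable F -> abs_summable (fun t => F t * tauc (k t)).
Proof. by move=> sF; apply: (abs_summable_mul_bounded (M := 1%R)) => // t; exact: cabs_tauc_le1. Qed.

Lemma tauA_conv_convl c a f : inA c -> inA a -> inA f ->
  tauA (conv (conv c a) f) = csum (fun t : (Cu2 * Cu2) * Cu2 =>
    c t.1.1 * a t.1.2 * f t.2 * tauc (Cu2_mulo (Cu2_mul t.1.1 t.1.2) (Some t.2))).
Proof.
move=> sc sa sf; have sca := inA_conv sc sa.
pose G x := csum (fun z => f z * tauc (Cu2_mul x z)).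
have -> : tauA (conv (conv c a) f) = csum (fun x => conv c a x * G x).
  rewrite tauA_conv // csum_pair; last exact: abs_summable_mul_tauc (abs_summable_prod sca sf).
  congr csum; apply: funext => x; rewrite -csumZ; last exact: abs_summable_mul_tauc sf.
  by congr csum; apply: funext => z /=; rewrite mulrA.
rewrite (csum_conv_mul (M := 2 * l1norm f)) //; last first.
  by move=> x; apply: norm_csum_bounded_mul_le sf _ => z; exact: cabs_tauc_le1.
rewrite [RHS]csum_pair; last first.
  exact: abs_summable_mul_tauc (abs_summable_prod (abs_summable_prod sc sa) sf).
congr csum; apply: funext => -[u v] /=; case: (Cu2_mul u v) => [w|] /=.
  rewrite -csumZ; last exact: abs_summable_mul_tauc sf.
  by congr csum; apply: funext => z; rewrite !mulrA.
rewrite mulr0 (_ : (fun z => _) = (fun _ => 0)) ?csum0 //.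
by apply: funext => z; rewrite mulr0.
Qed.

Lemma tauA_conv_convr c a f : inA c -> inA a -> inA f ->
  tauA (conv c (conv a f)) = csum (fun t : Cu2 * (Cu2 * Cu2) =>
    c t.1 * (a t.2.1 * f t.2.2) * tauc (Cu2_mulo (Some t.1) (Cu2_mul t.2.1 t.2.2))).
Proof.
move=> sc sa sf; have saf := inA_conv sa sf.
rewrite tauA_conv // [LHS]csum_pair; last first.
  exact: abs_summable_mul_tauc (abs_summable_prod sc saf).
rewrite [RHS]csum_pair; last first.
  exact: abs_summable_mul_tauc (abs_summable_prod sc (abs_summable_prod sa sf)).
congr csum; apply: funext => x /=.
transitivity (c x * csum (fun q => conv a f q * tauc (Cu2_mul x q))).
  rewrite -csumZ; last exact: abs_summable_mul_tauc saf.
  by congr csum; apply: funext => q; rewrite mulrA.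
rewrite (csum_conv_mul (M := 1%R)) //; last by move=> q; exact: cabs_tauc_le1.
rewrite -csumZ; last first.
  apply: (abs_summable_mul_bounded (M := Num.max 1 0)%R); first exact: abs_summable_prod.
  by move=> p; apply: cabs_extend0_le => q; exact: cabs_tauc_le1.
congr csum; apply: funext => -[y z] /=.
by case: (Cu2_mul y z) => [w|] /=; rewrite !mulrA.
Qed.

Lemma tauA_convA c a f : inA c -> inA a -> inA f ->
  tauA (conv (conv c a) f) = tauA (conv c (conv a f)).
Proof.
move=> sc sa sf; rewrite tauA_conv_convl // tauA_conv_convr //.
pose assoc (t : (Cu2 * Cu2) * Cu2) := (t.1.1, (t.1.2, t.2)).
rewrite -(csum_reindex (e := assoc)); first last.
- by move=> [x [y z]] H; case: H; exists ((x, y), z).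
- by move=> [[x1 y1] z1] [[x2 y2] z2] [-> -> ->].
by congr csum; apply: funext => -[[x y] z]; rewrite /= Cu2_mulA !mulrA.
Qed.

Lemma convDr c f g : inA c -> inA f -> inA g ->
  conv c (plusL1 f g) = plusL1 (conv c f) (conv c g).
Proof.
move=> sc sf sg; apply: funext => w.
rewrite /conv /plusL1 -csumD; try exact: abs_summable_conv_family.
by congr csum; apply: funext => p; case: ifP; rewrite ?mulrDr ?addr0.
Qed.

Lemma convZr c a f : inA c -> inA f -> conv c (scaleL1 a f) = scaleL1 a (conv c f).
Proof.
move=> sc sf; apply: funext => w.
rewrite /conv /scaleL1 -csumZ; last exact: abs_summable_conv_family.
by congr csum; apply: funext => p; case: ifP; rewrite ?mulr0 // mulrCA.
Qed.

Lemma conv0r c : conv c (zeroL1 R) = zeroL1 R.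
Proof.
apply: funext => w; rewrite /conv (_ : (fun p => _) = (fun _ => 0)) ?csum0 //.
by apply: funext => p; case: ifP; rewrite /zeroL1 ?mulr0.
Qed.

Lemma conv1l f : conv (delta R Cu2_e) f = f.
Proof.
apply: funext => w; rewrite /conv (csum_single (s := (Cu2_e, w))).
  by rewrite Cu2_mul1l eqxx /delta eqxx mul1r.
move=> [u v] ne; case: (eqVneq u Cu2_e) => [eu|ne_u].
  rewrite eu Cu2_mul1l; case: ifP => // /eqP [evw].
  by move: ne; rewrite eu evw eqxx.
by rewrite /delta (negPf ne_u) mul0r; case: ifP.
Qed.

Lemma inA_f0 : inA (f0 R).
Proof. by rewrite /f0; apply: inA_minus; [apply: inA_minus|]; exact: inA_delta. Qed.

Lemma csum_f0_mul (K : Cu2 -> R[i]) :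
  csum (fun v => f0 R v * K v) = K Cu2_e - K a1 - K a2.
Proof.
have sd s : abs_summable (fun v => delta R s v * K v) := abs_summable_delta_mul s K.
have -> : (fun v => f0 R v * K v) = (fun v =>
    (delta R Cu2_e v * K v + - 1 * (delta R a1 v * K v)) + - 1 * (delta R a2 v * K v)).
  by apply: funext => v; rewrite /f0 /minusL1 /a1 /a2 !mulrBl !mulN1r.
rewrite csumD; last 2 first.
- exact: abs_summableD (sd _) (abs_summableZ _ (sd _)).
- exact: abs_summableZ _ (sd _).
rewrite csumD ?csumZ ?csum_delta_mul ?mulN1r //; exact: abs_summableZ _ (sd _).
Qed.

Lemma tauA_conv_f0 c : inA c -> tauA (conv c (f0 R)) = 0.
Proof.
move=> sc; rewrite (tauA_conv sc inA_f0) csum_pair; last first.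
  exact: abs_summable_mul_tauc (abs_summable_prod sc inA_f0).
rewrite (_ : (fun u => _) = (fun _ => 0)) ?csum0 //; apply: funext => u /=.
under eq_fun do rewrite -mulrA.
rewrite csumZ; last exact: abs_summable_mul_tauc inA_f0.
by rewrite csum_f0_mul Cu2_mul1r tauc_split; ring.
Qed.

Lemma norm_tauA_conv_le c f : inA c -> inA f ->
  (cabs (tauA (conv c f)) <= 4 * (l1norm c * l1norm f))%R.
Proof.
move=> sc sf; apply: le_trans (tauA_bound (inA_conv sc sf)) _.
by have := l1norm_conv_le sc sf; nra.
Qed.

End L1Algebra.

Section TauKernelIdeal.
Variable R : realType.
Implicit Types (f g a c : Cu2 -> R[i]).

Lemma inA_zero : inA (zeroL1 R).
Proof. exact: (abs_summable_single (s := Cu2_e)). Qed.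

Lemma tauA_zero : tauA (zeroL1 R) = 0.
Proof.
rewrite /tauA (_ : (fun w => _) = (fun _ => 0)) ?csum0 //.
by apply: funext => w; rewrite /zeroL1 mul0r.
Qed.

Lemma minusL1K f g : plusL1 (minusL1 f g) g = f.
Proof. by apply: funext => w; rewrite /plusL1 /minusL1 subrK. Qed.

(* Because tau is a trace, this left-sided condition defines a two-sided ideal. *)
Definition tau_kernel_ideal : set (Cu2 -> R[i]) :=
  fun f => inA f /\ forall c, inA c -> tauA (conv c f) = 0.

Lemma tau_kernel_ideal_tauA f : tau_kernel_ideal f -> tauA f = 0.
Proof. by case=> sf Hf; rewrite -(conv1l f); apply: Hf; exact: inA_delta. Qed.

Lemma f0_in_tau_kernel_ideal : tau_kernel_ideal (f0 R).
Proof. by split=> [|c]; [exact: inA_f0 | exact: tauA_conv_f0]. Qed.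

Lemma tau_kernel_ideal_convl a f : inA a -> tau_kernel_ideal f ->
  tau_kernel_ideal (conv a f).
Proof.
move=> sa [sf Hf]; split=> [|c sc]; first exact: inA_conv.
by rewrite -tauA_convA // Hf //; exact: inA_conv.
Qed.

Lemma tau_kernel_ideal_convr a f : inA a -> tau_kernel_ideal f ->
  tau_kernel_ideal (conv f a).
Proof.
move=> sa [sf Hf]; split=> [|c sc]; first exact: inA_conv.
rewrite -tauA_convA // (tauA_convC (inA_conv sc sf) sa) -tauA_convA //.
by apply: Hf; exact: inA_conv.
Qed.

Lemma tau_kernel_ideal_closed f : inA f ->
  (forall eps : R, (0 < eps)%R ->
     exists2 g, tau_kernel_ideal g & (l1norm (minusL1 f g) < eps)%R) ->
  tau_kernel_ideal f.
Proof.
move=> sf approx; split=> // c sc.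
apply: (cabs_eq0_le_eps (K := 4 * l1norm c)%R); first by rewrite mulr_ge0 ?l1norm_ge0.
move=> eps eps0; have [g [sg Hg] fg_lt] := approx eps eps0.
have sfg := inA_minus sf sg.
rewrite -(minusL1K f g) convDr // (tauA_D (inA_conv sc sfg) (inA_conv sc sg)).
rewrite (Hg c sc) addr0.
apply: le_trans (norm_tauA_conv_le sc sfg) _.
by have := l1norm_ge0 c; have := l1norm_ge0 (minusL1 f g); nra.
Qed.

Lemma closed_ideal_tau_kernel : closed_ideal tau_kernel_ideal.
Proof.
split; first by move=> f [].
split.
- by split=> [|c _]; [exact: inA_zero | rewrite conv0r tauA_zero].
- move=> f g [sf Hf] [sg Hg]; split=> [|c sc]; first exact: inA_plus.
  rewrite convDr // (tauA_D (inA_conv sc sf) (inA_conv sc sg)).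
  by rewrite (Hf c sc) (Hg c sc) addr0.
- move=> a f [sf Hf]; split=> [|c sc]; first exact: inA_scale.
  by rewrite convZr // (tauA_Z a (inA_conv sc sf)) (Hf c sc) mulr0.
- by move=> a f sa If; split; [exact: tau_kernel_ideal_convl | exact: tau_kernel_ideal_convr].
- exact: tau_kernel_ideal_closed.
Qed.

Lemma J_sub_tau_kernel_ideal f : J f -> tau_kernel_ideal f.
Proof. by apply; [exact: closed_ideal_tau_kernel | exact: f0_in_tau_kernel_ideal]. Qed.

End TauKernelIdeal.

Theorem theorem4p3 (R : realType) :
  (forall (a : C R) (f g : Cu2 -> C R), inA f -> inA g ->
      tauA (plusL1 (scaleL1 a f) g) = a * tauA f + tauA g) /\
  (exists K : R, forall f : Cu2 -> C R, inA f -> cabs (tauA f) <= K * l1norm f) /\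
  (forall f g : Cu2 -> C R, inA f -> inA g -> tauA (conv f g) = tauA (conv g f)) /\
  (exists2 f : Cu2 -> C R, inA f & tauA f != 0) /\
  tauA (delta R Cu2_e) = 0 /\
  (forall f : Cu2 -> C R, J f -> tauA f = 0) /\
  (exists K : R, forall f j : Cu2 -> C R, inA f -> J j ->
      cabs (tauA f) <= K * l1norm (minusL1 f j)).
Proof.
have J_tau (j : Cu2 -> C R) : J j -> inA j /\ tauA j = 0.
  by move=> /J_sub_tau_kernel_ideal Ij; split; [case: Ij | exact: tau_kernel_ideal_tauA].
split; first by move=> a f g sf sg; rewrite (tauA_D (inA_scale a sf) sg) (tauA_Z a sf).
split; first by exists 2%R => f; exact: tauA_bound.
split; first exact: tauA_convC.
split.
  exists (delta R ([:: l1], [::])); first exact: inA_delta.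
  by rewrite tauA_delta tau_wE oner_neq0.
split; first by rewrite tauA_delta.
split; first by move=> f /J_tau [].
exists 2%R => f j sf /J_tau [sj tj].
by rewrite -[tauA f]subr0 -tj -tauA_minus //; exact: tauA_bound (inA_minus sf sj).
Qed.
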